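(* The Thue–Morse word $t$ is uniformly abelian-square rich.
   Context: The Thue–Morse word $t=0110100110010110\cdots$ is the fixed point starting with $0$ of the substitution $\mu:0\mapsto 01,\ 1\mapsto 10$. An abelian square is a word $v_1v_2$ where $v_1$ and $v_2$ have the same number of occurrences of each letter. An infinite word $w$ is uniformly abelian-square rich if there is a constant $C>0$ such that for all sufficiently large $n$, every factor of $w$ of length $n$ has at least $Cn^2$ distinct factors that are abelian squares. *)

From mathcomp Require Import all_boot all_order all_algebra.
Set Implicit Arguments. Unset Strict Implicit. Unset Printing Implicit Defensive.
Import Order.TTheory GRing.Theory Num.Theory.

(* Words over the binary alphabet {0,1}, encoded as bool (false = 0, true = 1). *)

Definition tm_mu (w : seq bool) : seq bool := flatten [seq [:: b; ~~ b] | b <- w].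

Definition tm_prefix (k : nat) : seq bool := iter k tm_mu [:: false].

(* The Thue--Morse word t : nat -> letter; the n-th letter is read from
   mu^(n+1)(0), which has length 2^(n+1) > n. *)
Definition thue_morse (n : nat) : bool := nth false (tm_prefix n.+1) n.

Definition ifactor (w : nat -> bool) (i n : nat) : seq bool := mkseq (fun j => w (i + j)) n.

Definition factors (u : seq bool) : seq (seq bool) :=
  [seq take l (drop i u) | i <- iota 0 (size u).+1, l <- iota 0 (size u - i).+1].

(* An abelian square: v = v1 v2 where v1 and v2 have the same number of
   occurrences of each letter (this forces |v1| = |v2|, so the split is the midpoint). *)
Definition abelian_square (v : seq bool) : bool :=
  has (fun i => all (fun a : bool => count_mem a (take i v) == count_mem a (drop i v))
                    [:: false; true])
      (iota 0 (size v).+1).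

Definition num_abelian_square_factors (u : seq bool) : nat :=
  size (undup [seq v <- factors u | abelian_square v]).

Definition uniformly_abelian_square_rich (w : nat -> bool) : Prop :=
  exists C : rat, (0 < C)%R /\
    exists n0 : nat, forall n : nat, (n0 <= n)%N -> forall i : nat,
      (C * (n%:R ^+ 2) <= (num_abelian_square_factors (ifactor w i n))%:R)%R.

(* The Thue-Morse word satisfies t(2n) = t(n) and t(2n+1) = ~~ t(n), so every
   factor of even length starting at an even position has as many 0s as 1s;
   in particular such a factor of length divisible by 4 is an abelian square.
   Inside a factor of length n >= 42K, the K^2 factors of length 20m
   (K <= m < 2K) starting at the even positions 2(a+j) (j < K) are pairwise
   distinct: two equal ones would have a period smaller than 2K on a window
   of length at least 20K, whereas t has no factor of length 5d with period d
   (an even period halves by the recurrence, an odd one forces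
   t(2b) = t(2b+1)). *)

From mathcomp Require Import all_boot all_order all_algebra.
From mathcomp Require Import zify.
Set Implicit Arguments. Unset Strict Implicit. Unset Printing Implicit Defensive.
Import Order.TTheory GRing.Theory Num.Theory.

Lemma tm_mu_cat u v : tm_mu (u ++ v) = tm_mu u ++ tm_mu v.
Proof. by rewrite /tm_mu map_cat flatten_cat. Qed.

Lemma size_tm_mu w : size (tm_mu w) = (size w).*2.
Proof. by elim: w => [|b w IH] //=; rewrite IH doubleS. Qed.

Lemma nth_tm_mu_double w n : nth false (tm_mu w) n.*2 = nth false w n.
Proof. by elim: w n => [|b w IH] [|n] //=; rewrite IH. Qed.

Lemma nth_tm_mu_doubleS w n : n < size w ->
  nth false (tm_mu w) n.*2.+1 = ~~ nth false w n.
Proof. by elim: w n => [|b w IH] [|n] //= /IH. Qed.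

Lemma tm_prefixS k : tm_prefix k.+1 = tm_mu (tm_prefix k).
Proof. by []. Qed.

Lemma size_tm_prefix k : size (tm_prefix k) = 2 ^ k.
Proof. by elim: k => [|k IH] //=; rewrite size_tm_mu IH -mul2n expnS. Qed.

Lemma tm_mu_prefix u v : prefix u v -> prefix (tm_mu u) (tm_mu v).
Proof. by case/prefixP=> s ->; rewrite tm_mu_cat prefix_prefix. Qed.

Lemma tm_prefix_prefixS k : prefix (tm_prefix k) (tm_prefix k.+1).
Proof. by elim: k => [|k IH] //; apply: tm_mu_prefix. Qed.

Lemma tm_prefix_prefix k k' : k <= k' -> prefix (tm_prefix k) (tm_prefix k').
Proof.
move/subnKC <-; elim: (k' - k) => [|m IH]; first by rewrite addn0 prefix_refl.
by rewrite addnS (prefix_trans IH) ?tm_prefix_prefixS.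
Qed.

Lemma nth_prefix (T : eqType) (x0 : T) u v n : prefix u v -> n < size u ->
  nth x0 v n = nth x0 u n.
Proof. by case/prefixP=> s -> ltnu; rewrite nth_cat ltnu. Qed.

Lemma thue_morseE k n : n < 2 ^ k -> thue_morse n = nth false (tm_prefix k) n.
Proof.
pose m := maxn k n.+1.
have nth_max j : n < 2 ^ j -> j <= m -> nth false (tm_prefix m) n = nth false (tm_prefix j) n.
  by move=> ltnj lejm; rewrite (nth_prefix _ (tm_prefix_prefix lejm)) ?size_tm_prefix.
have ltn_pow : n < 2 ^ n.+1 by rewrite ltnW // ltn_expl.
by move=> ltnk; rewrite /thue_morse -(nth_max n.+1) ?leq_maxr // -(nth_max k) ?leq_maxl.
Qed.

Lemma thue_morse_double n : thue_morse n.*2 = thue_morse n.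
Proof.
have ltn_pow : n < 2 ^ n.+1 by rewrite ltnW // ltn_expl.
have ltn_pow2 : n.*2.+1 < 2 ^ n.+2 by rewrite expnS; lia.
rewrite (@thue_morseE n.+2 n.*2) 1?ltnW // (@thue_morseE n.+1) //.
by rewrite tm_prefixS nth_tm_mu_double.
Qed.

Lemma thue_morse_doubleS n : thue_morse n.*2.+1 = ~~ thue_morse n.
Proof.
have ltn_pow : n < 2 ^ n.+1 by rewrite ltnW // ltn_expl.
have ltn_pow2 : n.*2.+1 < 2 ^ n.+2 by rewrite expnS; lia.
rewrite (@thue_morseE n.+2) // (@thue_morseE n.+1) //.
by rewrite tm_prefixS nth_tm_mu_doubleS ?size_tm_prefix.
Qed.

Local Notation t := thue_morse.

Definition window_period (w : nat -> bool) (p L d : nat) : Prop :=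
  forall j, j < L -> w (p + j) = w (p + j + d).

Lemma thue_morse_window_period_halve p L d a K : p <= a.*2 -> a.*2 + K.*2 <= (p + L).+1 ->
  window_period t p L d.*2 -> window_period t a K d.
Proof.
move=> lepa leaK per j ltjK; have := per (a.*2 + j.*2 - p) ltac:(lia).
have -> : p + (a.*2 + j.*2 - p) = (a + j).*2 by lia.
by rewrite -doubleD !thue_morse_double.
Qed.

Lemma thue_morse_no_odd_window_period p L d : 5 <= L -> ~ window_period t p L d.*2.+1.
Proof.
move=> leL per.
have equal_next a : p <= a.*2 -> a.*2.+1 < p + L -> t (a + d).+1 = t (a + d).
  move=> lepa ltaL.
  have := per (a.*2 - p) ltac:(lia); have := per (a.*2.+1 - p) ltac:(lia).
  have -> : p + (a.*2 - p) + d.*2.+1 = (a + d).*2.+1 by lia.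
  have -> : p + (a.*2.+1 - p) + d.*2.+1 = (a + d).+1.*2 by lia.
  have -> : p + (a.*2 - p) = a.*2 by lia.
  have -> : p + (a.*2.+1 - p) = a.*2.+1 by lia.
  rewrite !thue_morse_double !thue_morse_doubleS => <- ->; exact: negbK.
pose a := uphalf p + odd (uphalf p + d); pose b := (a + d)./2.
have a_d_even : a + d = b.*2 by rewrite /b /a; lia.
have := equal_next a ltac:(rewrite /a; lia) ltac:(rewrite /a; lia).
by rewrite a_d_even thue_morse_doubleS thue_morse_double; case: (t b).
Qed.

Lemma thue_morse_aperiodic p L d : 0 < d -> 5 * d <= L -> ~ window_period t p L d.
Proof.
elim/ltn_ind: d p L => d IH p L d_gt0 leL.
case/boolP: (odd d) => [odd_d | even_d].
  by rewrite -[d]odd_double_half odd_d; apply: thue_morse_no_odd_window_period; lia.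
have d_double : d = (d./2).*2 by lia.
rewrite d_double => /(thue_morse_window_period_halve (a := uphalf p) (K := 5 * d./2)) per.
by apply: (IH d./2 _ (uphalf p) (5 * d./2)); [lia | lia | lia | apply: per; lia].
Qed.

Lemma ifactorE (w : nat -> bool) i n : ifactor w i n = map w (iota i n).
Proof. by rewrite /ifactor /mkseq -[in RHS](addn0 i) iotaDl -map_comp. Qed.

Lemma ifactorD (w : nat -> bool) i m n :
  ifactor w i (m + n) = ifactor w i m ++ ifactor w (i + m) n.
Proof. by rewrite !ifactorE iotaD map_cat. Qed.

Lemma size_ifactor (w : nat -> bool) i n : size (ifactor w i n) = n.
Proof. exact: size_mkseq. Qed.

Lemma ifactor_in_factors (w : nat -> bool) i n s l : s + l <= n ->
  ifactor w (i + s) l \in factors (ifactor w i n).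
Proof.
move/subnKC => <-; rewrite -addnA ifactorD ifactorD.
apply/allpairsPdep; exists s, l; rewrite !mem_iota !size_cat !size_ifactor.
by rewrite drop_size_cat ?take_size_cat ?size_ifactor //; split => //; lia.
Qed.

Lemma count_thue_morse_block c a b : count_mem c (ifactor t a.*2 b.*2) = b.
Proof.
elim: b => [|b IH] //; rewrite doubleS -addn2 ifactorD count_cat IH.
rewrite -doubleD /= addn0 addn1 thue_morse_double thue_morse_doubleS.
by case: (t (a + b)); case: (c); rewrite /= ?addn0 ?addn1.
Qed.

Lemma abelian_square_thue_morse a b : abelian_square (ifactor t a.*2 b.*2.*2).
Proof.
apply/hasP; exists b.*2; first by rewrite mem_iota size_ifactor; lia.
apply/allP => c _.
have -> : b.*2.*2 = b.*2 + b.*2 by lia.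
rewrite ifactorD take_size_cat ?drop_size_cat ?size_ifactor // -doubleD.
by rewrite /= !count_thue_morse_block.
Qed.

Lemma ifactor_eq_window_period (w : nat -> bool) p q L : p <= q ->
  ifactor w p L = ifactor w q L -> window_period w p L (q - p).
Proof.
move=> lepq E j ltjL; have := congr1 (nth false ^~ j) E.
by rewrite /= !nth_mkseq // => ->; congr w; lia.
Qed.

Lemma ifactor_thue_morse_inj L p q : p <= q -> 5 * (q - p) <= L ->
  ifactor t p L = ifactor t q L -> p = q.
Proof.
move=> lepq leL /(ifactor_eq_window_period lepq) per.
case: (ltnP p q) => [ltpq | leqp]; last by apply/eqP; rewrite eqn_leq lepq.
by case: (thue_morse_aperiodic _ leL per); rewrite subn_gt0.
Qed.

Lemma size_abelian_square_factors S u : uniq S -> all abelian_square S ->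
  {subset S <= factors u} -> size S <= num_abelian_square_factors u.
Proof.
move=> uniqS /allP sqS subS; apply: uniq_leq_size uniqS _ => v Sv.
by rewrite mem_undup mem_filter sqS ?subS.
Qed.

Definition tm_square_family a K : seq (seq bool) :=
  [seq ifactor t (a + j).*2 (5 * m).*2.*2 | m <- iota K K, j <- iota 0 K].

Lemma size_tm_square_family a K : size (tm_square_family a K) = K * K.
Proof. by rewrite size_allpairs !size_iota. Qed.

Lemma uniq_tm_square_family a K : uniq (tm_square_family a K).
Proof.
apply: allpairs_uniq => [||p1 p2]; rewrite ?iota_uniq //.
move=> /allpairsP[[m1 j1] [+ + ->]] /allpairsP[[m2 j2] [+ + ->]] /=.
rewrite !mem_iota /= => m1K j1K _ j2K E.
have m12 : m1 = m2 by have := congr1 size E; rewrite !size_ifactor; lia.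
subst m2; congr pair.
wlog le_j12 : j1 j2 j1K j2K E / j1 <= j2.
  by move=> wlog_j; case: (leqP j1 j2) => [|/ltnW] le_j; [|symmetry]; apply: wlog_j.
suff : (a + j1).*2 = (a + j2).*2 by lia.
by apply: (ifactor_thue_morse_inj _ _ E); lia.
Qed.

Lemma all_abelian_square_tm_square_family a K :
  all abelian_square (tm_square_family a K).
Proof. by apply/allP => _ /allpairsP[[m j] [_ _ ->]]; apply: abelian_square_thue_morse. Qed.

Lemma tm_square_family_factors i n K : 42 * K <= n ->
  {subset tm_square_family (uphalf i) K <= factors (ifactor t i n)}.
Proof.
move=> leKn _ /allpairsP[[m j] [/= + + ->]]; rewrite !mem_iota /= => mK jK.
have -> : (uphalf i + j).*2 = i + ((uphalf i).*2 - i + j.*2) by lia.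
by apply: ifactor_in_factors; lia.
Qed.

Lemma thue_morse_abelian_square_factors_ge i n : 42 <= n ->
  n ^ 2 <= 84 ^ 2 * num_abelian_square_factors (ifactor t i n).
Proof.
move=> len; have [K leKn ltnK] : exists2 K, 42 * K <= n & n < 84 * K.
  by exists (n %/ 42); lia.
have := size_abelian_square_factors (uniq_tm_square_family (uphalf i) K)
  (all_abelian_square_tm_square_family _ _) (@tm_square_family_factors i n K leKn).
rewrite size_tm_square_family => leKN.
apply: (@leq_trans ((84 * K) ^ 2)); first by rewrite leq_exp2r // ltnW.
by rewrite expnMn leq_mul // -mulnn.
Qed.

Lemma ler_natV_sqr (R : numFieldType) (c n N : nat) : 0 < c -> n ^ 2 <= c * N ->
  (c%:R^-1 * n%:R ^+ 2 <= N%:R :> R)%R.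
Proof. by move=> c_gt0; rewrite ler_pdivrMl ?ltr0n // -natrX -natrM ler_nat. Qed.

Theorem proposition2 : uniformly_abelian_square_rich thue_morse.
Proof.
exists (84 ^ 2)%:R^-1%R; split; first by rewrite invr_gt0 ltr0n.
exists 42 => n len i.
by apply: ler_natV_sqr; [|exact: thue_morse_abelian_square_factors_ge].
Qed.
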